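(* Let $[\mathbf v,d]=[v_{11},v_{12},v_{21},v_{22},d]$ with $\mathbf v_1=(v_{11},v_{12})\neq0$, $\mathbf v_2=(v_{21},v_{22})\neq0$ and $d\neq0$. If the following three conditions all hold: (1) $v_{11}^2+v_{12}^2\neq0$ and $v_{21}^2+v_{22}^2\neq0$; (2) $v_{21}\neq0$ or $v_{11}^2-d^2\neq0$; (3) $v_{11}\neq0$ or $v_{21}^2-d^2\neq0$; then neither $L_1$ nor $L_2$ is a polynomial factor of $h$. Moreover, if any one of the conditions (1), (2), (3) fails, then $L_1$ or $L_2$ is a polynomial factor of $h$.
   Context: In variables $u,y_1,y_2$: $L_1=v_{11}(u-y_1)-v_{12}y_2$, $L_2=-v_{21}(u+y_1)-v_{22}y_2$, $f_1=(u-y_1)^2+y_2^2$, $f_2=(u+y_1)^2+y_2^2$, and $h=(L_2^2f_1+L_1^2f_2-d^2f_1f_2)^2-4L_1^2L_2^2f_1f_2$, a homogeneous polynomial of degree $8$. Parameters are complex numbers. *)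

From HB Require Import structures.
From mathcomp Require Import all_boot all_order all_algebra.
From mathcomp Require Import reals.
From mathcomp Require Import complex.
From mathcomp Require Import mpoly.
Set Implicit Arguments. Unset Strict Implicit. Unset Printing Implicit Defensive.
Import Order.TTheory GRing.Theory Num.Theory.
Local Open Scope ring_scope.

Section Defs.
Variable C : comRingType.
Definition pu : {mpoly C[3]} := 'X_(inord 0).
Definition py1 : {mpoly C[3]} := 'X_(inord 1).
Definition py2 : {mpoly C[3]} := 'X_(inord 2).

Definition L1 (v11 v12 : C) : {mpoly C[3]} :=
  v11%:MP * (pu - py1) - v12%:MP * py2.
Definition L2 (v21 v22 : C) : {mpoly C[3]} :=
  - (v21%:MP * (pu + py1)) - v22%:MP * py2.
Definition f1 : {mpoly C[3]} := (pu - py1) ^+ 2 + py2 ^+ 2.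
Definition f2 : {mpoly C[3]} := (pu + py1) ^+ 2 + py2 ^+ 2.
Definition hpoly (v11 v12 v21 v22 d : C) : {mpoly C[3]} :=
  let l1 := L1 v11 v12 in let l2 := L2 v21 v22 in
  (l2 ^+ 2 * f1 + l1 ^+ 2 * f2 - d%:MP ^+ 2 * f1 * f2) ^+ 2
  - 4%:R * l1 ^+ 2 * l2 ^+ 2 * f1 * f2.

Definition poly_factor (p q : {mpoly C[3]}) : Prop := exists r, q = p * r.
End Defs.

From mathcomp Require Import all_boot all_algebra.
From mathcomp Require Import reals complex mpoly ring.
Set Implicit Arguments.
Unset Strict Implicit.
Unset Printing Implicit Defensive.

Import GRing.Theory Num.Theory.
Local Open Scope ring_scope.
Local Open Scope complex_scope.

(** Modulo L1 one has h = (f1 (L2^2 - d^2 f2))^2, so L1 divides h as soon as it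
    divides f1, which happens when v11^2 + v12^2 = 0, or L2^2 - d^2 f2, which
    happens when v11 = 0 and v21^2 = d^2 (L1 is then a multiple of y2, and so is
    L2^2 - d^2 f2). Conversely, on the plane L1 = 0 parametrised by s = u + y1,
    with u - y1 = v12 and y2 = v11, the form f1 is the constant v11^2 + v12^2,
    while L2^2 - d^2 f2 is a quadratic in s that vanishes identically only if
    v11 = 0 and v21^2 = d^2.
    The substitution (y1, y2) -> (-y1, -y2) swaps f1 and f2 and sends L1, L2 to
    -L2, -L1, so it exchanges the roles of the two lines. *)

Section PolyFactor.
Variable C : comNzRingType.
Implicit Types p q r : {mpoly C[3]}.

Lemma poly_factorMl p q r : poly_factor p q -> poly_factor p (r * q).
Proof. by case=> s ->; exists (r * s); rewrite mulrCA. Qed.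

Lemma poly_factorMr p q r : poly_factor p q -> poly_factor p (q * r).
Proof. by rewrite mulrC; apply: poly_factorMl. Qed.

Lemma poly_factor_sqrD p q r : poly_factor p q -> poly_factor p (q ^+ 2 + p * r).
Proof. by case=> s ->; exists (s * (p * s) + r); ring. Qed.

Lemma poly_factorN p q : poly_factor (- p) q <-> poly_factor p q.
Proof. by split=> -[s ->]; exists (- s); ring. Qed.

Lemma poly_factor_meval p q (x : 'I_3 -> C) :
  poly_factor p q -> p.@[x] = 0 -> q.@[x] = 0.
Proof. by case=> s -> px; rewrite mevalM px mul0r. Qed.

Lemma poly_factor_comp (lq : 3.-tuple {mpoly C[3]}) p q :
  poly_factor p q -> poly_factor (p \mPo lq) (q \mPo lq).
Proof. by case=> s ->; exists (s \mPo lq); rewrite rmorphM. Qed.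

End PolyFactor.

Section PolyFactorUnit.
Variable C : comUnitRingType.
Implicit Types p q : {mpoly C[3]}.

Lemma poly_factorCl (c : C) p q :
  c \is a GRing.unit -> poly_factor p q -> poly_factor (c%:MP * p) q.
Proof.
move=> cU [s ->]; exists (c^-1%:MP * s).
by rewrite mulrACA -rmorphM mulrV // rmorph1 mul1r.
Qed.

Lemma poly_factorCr (c : C) p q :
  c \is a GRing.unit -> poly_factor p (c%:MP * q) -> poly_factor p q.
Proof.
move=> cU [s e]; exists (c^-1%:MP * s).
by rewrite mulrCA -e mulrA -rmorphM mulVr // rmorph1 mul1r.
Qed.

End PolyFactorUnit.

Section Hpoly.
Variable C : comNzRingType.

Definition hpoly_res (v21 v22 d : C) : {mpoly C[3]} :=
  f1 C * (L2 v21 v22 ^+ 2 - d%:MP ^+ 2 * f2 C).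

Lemma hpoly_modL1 v11 v12 v21 v22 d : exists r,
  hpoly v11 v12 v21 v22 d = hpoly_res v21 v22 d ^+ 2 + L1 v11 v12 * r.
Proof.
exists (L1 v11 v12 * (2%:R * hpoly_res v21 v22 d * f2 C
  + L1 v11 v12 ^+ 2 * f2 C ^+ 2 - 4%:R * L2 v21 v22 ^+ 2 * f1 C * f2 C)).
by rewrite /hpoly /hpoly_res /=; ring.
Qed.

Lemma L1_factor_hpoly_of_res v11 v12 v21 v22 d :
  poly_factor (L1 v11 v12) (hpoly_res v21 v22 d) ->
  poly_factor (L1 v11 v12) (hpoly v11 v12 v21 v22 d).
Proof. by have [r ->] := hpoly_modL1 v11 v12 v21 v22 d; apply: poly_factor_sqrD. Qed.

Lemma meval_hpoly_on_L1 v11 v12 v21 v22 d (x : 'I_3 -> C) :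
  (L1 v11 v12).@[x] = 0 ->
  (hpoly v11 v12 v21 v22 d).@[x] = (hpoly_res v21 v22 d).@[x] ^+ 2.
Proof.
have [r ->] := hpoly_modL1 v11 v12 v21 v22 d => L1x.
by rewrite mevalD mevalM L1x mul0r addr0 rmorphXn.
Qed.

Definition pt (u y1 y2 : C) : 'I_3 -> C := tnth [tuple u; y1; y2].

Lemma meval_pt u y1 y2 :
  [/\ (pu C).@[pt u y1 y2] = u, (py1 C).@[pt u y1 y2] = y1
    & (py2 C).@[pt u y1 y2] = y2].
Proof. by rewrite !mevalXU /pt !(tnth_nth 0) !inordK. Qed.

Lemma meval_pt_L1 v11 v12 u y1 y2 :
  (L1 v11 v12).@[pt u y1 y2] = v11 * (u - y1) - v12 * y2.
Proof.
have [eu ey1 ey2] := meval_pt u y1 y2.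
by rewrite /L1 !(mevalB, mevalM, mevalC) eu ey1 ey2.
Qed.

Lemma meval_pt_hpoly_res v21 v22 d u y1 y2 :
  (hpoly_res v21 v22 d).@[pt u y1 y2] = ((u - y1) ^+ 2 + y2 ^+ 2) *
    ((v21 * (u + y1) + v22 * y2) ^+ 2 - d ^+ 2 * ((u + y1) ^+ 2 + y2 ^+ 2)).
Proof.
have [eu ey1 ey2] := meval_pt u y1 y2.
rewrite /hpoly_res /L2 /f1 /f2.
rewrite !(mevalB, mevalD, mevalN, mevalM, mevalC, rmorphXn) eu ey1 ey2.
by ring.
Qed.

Definition yflip : 3.-tuple {mpoly C[3]} := [tuple pu C; - py1 C; - py2 C].

Lemma comp_yflip :
  [/\ pu C \mPo yflip = pu C, py1 C \mPo yflip = - py1 C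
    & py2 C \mPo yflip = - py2 C].
Proof. by rewrite !comp_mpolyXU /= !inordK. Qed.

Lemma comp_yflip_L1 a b : L1 a b \mPo yflip = - L2 a b.
Proof.
have [eu ey1 ey2] := comp_yflip.
by rewrite /L1 /L2 !(rmorphB, rmorphM) /= !comp_mpolyC eu ey1 ey2; ring.
Qed.

Lemma comp_yflip_L2 a b : L2 a b \mPo yflip = - L1 a b.
Proof.
have [eu ey1 ey2] := comp_yflip.
rewrite /L1 /L2 !(rmorphB, rmorphN, rmorphD, rmorphM) /= !comp_mpolyC.
by rewrite eu ey1 ey2; ring.
Qed.

Lemma comp_yflip_f1 : f1 C \mPo yflip = f2 C.
Proof.
have [eu ey1 ey2] := comp_yflip.
by rewrite /f1 /f2 !(rmorphB, rmorphD, rmorphXn) /= eu ey1 ey2; ring.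
Qed.

Lemma comp_yflip_f2 : f2 C \mPo yflip = f1 C.
Proof.
have [eu ey1 ey2] := comp_yflip.
by rewrite /f1 /f2 !(rmorphB, rmorphD, rmorphXn) /= eu ey1 ey2; ring.
Qed.

Lemma comp_yflip_hpoly a b c e d : hpoly a b c e d \mPo yflip = hpoly c e a b d.
Proof.
rewrite /hpoly /=.
move: comp_yflip_f1 comp_yflip_f2 (comp_yflip_L1 a b) (comp_yflip_L2 c e).
move: (f1 C) (f2 C) (L1 a b) (L2 c e) (L1 c e) (L2 a b).
move=> g1 g2 l1 l2 l1' l2' eg1 eg2 el1 el2.
rewrite !(rmorphB, rmorphD, rmorphM, rmorphXn, rmorph_nat) /=.
rewrite eg1 eg2 el1 el2 comp_mpolyC.
by ring.
Qed.

Lemma L2_factor_hpoly_swap (a b c e d : C) :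
  poly_factor (L2 c e) (hpoly a b c e d) <-> poly_factor (L1 c e) (hpoly c e a b d).
Proof.
split=> /(@poly_factor_comp _ yflip);
  by rewrite comp_yflip_hpoly ?comp_yflip_L1 ?comp_yflip_L2 => /poly_factorN.
Qed.

End Hpoly.

Section Field.
Variable F : fieldType.
Hypothesis two_neq0 : 2%:R != 0 :> F.

Lemma sqr_affine_eq_scaled_norm (p q r d : F) : d != 0 ->
  (forall s, (p * s + q * r) ^+ 2 = d ^+ 2 * (s ^+ 2 + r ^+ 2)) ->
  r = 0 /\ p ^+ 2 = d ^+ 2.
Proof.
move=> d0 H; have H0 := H 0; have H1 := H 1; have Hm := H (-1).
have p2 : p ^+ 2 = d ^+ 2.
  apply: (mulfI two_neq0).
  transitivity ((p * 1 + q * r) ^+ 2 + (p * -1 + q * r) ^+ 2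
    - 2%:R * (p * 0 + q * r) ^+ 2); first by ring.
  by rewrite H0 H1 Hm; ring.
have pqr : p * q * r = 0.
  apply: (mulfI (mulf_neq0 two_neq0 two_neq0)); rewrite mulr0.
  transitivity ((p * 1 + q * r) ^+ 2 - (p * -1 + q * r) ^+ 2); first by ring.
  by rewrite H1 Hm; ring.
split=> //; apply/eqP.
have : (p * q * r) ^+ 2 = p ^+ 2 * (p * 0 + q * r) ^+ 2 by ring.
rewrite pqr H0 p2 expr0n add0r => /esym/eqP.
by rewrite !mulf_eq0 (negbTE d0) /= orbb.
Qed.

Variables v11 v12 v21 v22 d : F.

Lemma L1_factor_hpoly_degenerate : d != 0 ->
  poly_factor (L1 v11 v12) (hpoly v11 v12 v21 v22 d) ->
  (v11 ^+ 2 + v12 ^+ 2 == 0) || (v11 == 0) && (v21 ^+ 2 - d ^+ 2 == 0).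
Proof.
move=> d0 L1h; case: eqVneq => //= n0.
have res0 s : (v21 * s + v22 * v11) ^+ 2 = d ^+ 2 * (s ^+ 2 + v11 ^+ 2).
  pose u := (s + v12) / 2%:R; pose y1 := (s - v12) / 2%:R.
  have eu : u - y1 = v12 by rewrite /u /y1; field.
  have es : u + y1 = s by rewrite /u /y1; field.
  have L1x : (L1 v11 v12).@[pt u y1 v11] = 0 by rewrite meval_pt_L1 eu; ring.
  have := poly_factor_meval L1h L1x.
  rewrite meval_hpoly_on_L1 // meval_pt_hpoly_res eu es => /eqP.
  by rewrite sqrf_eq0 mulf_eq0 addrC (negbTE n0) subr_eq0 => /eqP.
have [-> p2] := sqr_affine_eq_scaled_norm d0 res0.
by rewrite eqxx p2 subrr eqxx.
Qed.

Lemma L1_factor_hpoly_of_degenerate : (v11, v12) != (0, 0) ->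
  (v11 ^+ 2 + v12 ^+ 2 == 0) || (v11 == 0) && (v21 ^+ 2 - d ^+ 2 == 0) ->
  poly_factor (L1 v11 v12) (hpoly v11 v12 v21 v22 d).
Proof.
move=> nz /orP[/eqP n0 | /andP[/eqP v0 /eqP e0]]; apply: L1_factor_hpoly_of_res.
  have v0 : v11 != 0.
    apply: contraNneq nz => v0; move: n0; rewrite v0 expr0n add0r => /eqP.
    by rewrite sqrf_eq0 => /eqP ->.
  apply: poly_factorMr; apply: (@poly_factorCr _ (v11 ^+ 2)).
    by rewrite unitfE expf_neq0.
  exists (v11%:MP * (pu F - py1 F) + v12%:MP * py2 F).
  have -> : (v11 ^+ 2)%:MP * f1 F = L1 v11 v12 * (v11%:MP * (pu F - py1 F)
      + v12%:MP * py2 F) + (v11 ^+ 2 + v12 ^+ 2)%:MP * py2 F ^+ 2.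
    by rewrite /f1 /L1; ring.
  by rewrite n0 rmorph0 mul0r addr0.
have v12n : v12 != 0 by apply: contraNneq nz => v12z; rewrite v0 v12z.
have -> : L1 v11 v12 = (- v12)%:MP * py2 F by rewrite /L1 v0; ring.
apply: poly_factorMl; apply: poly_factorCl; first by rewrite unitfE oppr_eq0.
exists (2%:R * v21%:MP * v22%:MP * (pu F + py1 F) + (v22 ^+ 2 - d ^+ 2)%:MP * py2 F).
have -> : L2 v21 v22 ^+ 2 - d%:MP ^+ 2 * f2 F = py2 F * (2%:R * v21%:MP * v22%:MP
    * (pu F + py1 F) + (v22 ^+ 2 - d ^+ 2)%:MP * py2 F)
    + (v21 ^+ 2 - d ^+ 2)%:MP * (pu F + py1 F) ^+ 2.
  by rewrite /L2 /f2; ring.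
by rewrite e0 rmorph0 mul0r addr0.
Qed.

Lemma L1_factor_hpolyP : (v11, v12) != (0, 0) -> d != 0 ->
  poly_factor (L1 v11 v12) (hpoly v11 v12 v21 v22 d) <->
  (v11 ^+ 2 + v12 ^+ 2 == 0) || (v11 == 0) && (v21 ^+ 2 - d ^+ 2 == 0).
Proof.
move=> nz d0; split; first exact: L1_factor_hpoly_degenerate.
exact: L1_factor_hpoly_of_degenerate.
Qed.

End Field.

Theorem lemma8p3 (R : realType) (v11 v12 v21 v22 d : R[i]) :
  (v11, v12) != (0, 0) -> (v21, v22) != (0, 0) -> d != 0 ->
  let cond1 := (v11 ^+ 2 + v12 ^+ 2 != 0) && (v21 ^+ 2 + v22 ^+ 2 != 0) in
  let cond2 := (v21 != 0) || (v11 ^+ 2 - d ^+ 2 != 0) in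
  let cond3 := (v11 != 0) || (v21 ^+ 2 - d ^+ 2 != 0) in
  ([&& cond1, cond2 & cond3] ->
     ~ poly_factor (L1 v11 v12) (hpoly v11 v12 v21 v22 d) /\
     ~ poly_factor (L2 v21 v22) (hpoly v11 v12 v21 v22 d)) /\
  (~~ [&& cond1, cond2 & cond3] ->
     poly_factor (L1 v11 v12) (hpoly v11 v12 v21 v22 d) \/
     poly_factor (L2 v21 v22) (hpoly v11 v12 v21 v22 d)).
Proof.
move=> nz1 nz2 d0 /=.
have two_neq0 : 2%:R != 0 :> R[i] by rewrite pnatr_eq0.
rewrite (L1_factor_hpolyP two_neq0 v21 v22 nz1 d0) L2_factor_hpoly_swap.
rewrite (L1_factor_hpolyP two_neq0 v11 v12 nz2 d0).
split=> c; [split; apply/negP | apply/orP]; move: c.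
all: move: (v11 ^+ 2 + v12 ^+ 2 == 0) (v21 ^+ 2 + v22 ^+ 2 == 0) (v11 == 0).
all: move: (v21 == 0) (v11 ^+ 2 - d ^+ 2 == 0) (v21 ^+ 2 - d ^+ 2 == 0).
all: by do 6!case.
Qed.
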